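(* Let $\mathbf{z}\sim\mathcal{N}(\mathbf{0},\mathbf{I}_{d\times d})$, $\mathbf{x}\in\mathbb{R}^d$, $y=\langle\mathbf{x},\mathbf{z}\rangle$, and let $\mathbf{D}^*=[\mathbf{d}^*_1,\dots,\mathbf{d}^*_n]\in\mathbb{R}^{d\times n}$ be column-orthogonal, with queries $q_i=\langle\mathbf{d}^*_i,\mathbf{z}\rangle$ having observed values $r_i$. Then $$f_{\mathbf{D}^*}\big(\mathbf{x},\{r_{\pi(i)}\}_{i=1}^k\big)=\sum_{i\in S}\langle\mathbf{d}^*_i,\mathbf{x}\rangle r_i,$$ where $S=\{\pi(1),\dots,\pi(k)\}$ is the index set selected by IP-OMP applied to $\mathbf{x}$ and $\mathbf{D}^*$.
   Context: Column-orthogonal means $\mathbf{A}^\top\mathbf{A}=\mathbf{I}$. For a query feature matrix $\mathbf{D}=[\mathbf{d}_1,\dots,\mathbf{d}_n]$, the IP-OMP selection $\pi:[k]\to[n]$ is defined iteratively for $t=1,\dots,k$ by $\pi(t)=\arg\max_i \frac{|\langle\Pi^\perp_{t-1}\mathbf{d}_i,\Pi^\perp_{t-1}\mathbf{x}\rangle|}{\|\Pi^\perp_{t-1}\mathbf{d}_i\|_2\|\Pi^\perp_{t-1}\mathbf{x}\|_2}$ over not-yet-selected indices, with $\Pi^\perp_{t-1}$ the orthogonal projection onto the orthogonal complement of the span of $\mathbf{d}_{\pi(1)},\dots,\mathbf{d}_{\pi(t-1)}$. $f_{\mathbf{D}}$ is the maximum likelihood estimator of $y$ given $q_{\pi(i)}=r_{\pi(i)}$,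 $i=1,\dots,k$. *)

From HB Require Import structures.
From mathcomp Require Import all_boot all_order all_algebra.
From mathcomp Require Import all_classical all_reals all_analysis.
Set Implicit Arguments. Unset Strict Implicit. Unset Printing Implicit Defensive.
Import Order.TTheory GRing.Theory Num.Theory.
Local Open Scope ring_scope.

Section Defs.
Variable R : realType.
Variable d n : nat.

Definition dot (u v : 'cV[R]_d) : R := (u^T *m v) 0 0.
Definition vnorm (u : 'cV[R]_d) : R := Num.sqrt (dot u u).

Definition col_orthogonal (D : 'M[R]_(d, n)) : Prop := D^T *m D = 1%:M.

Definition is_perp_proj (D : 'M[R]_(d, n)) (A : {set 'I_n}) (v w : 'cV[R]_d) : Prop :=
  (forall j, j \in A -> dot (col j D) w = 0) /\
  exists c : 'I_n -> R, v - w = \sum_(j in A) c j *: col j D.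

Definition ipomp_score (pd px : 'cV[R]_d) : R :=
  `|dot pd px| / (vnorm pd * vnorm px).

(* pi : [k] -> [n] is an IP-OMP selection for x and D: pi is injective
   (indices are never reselected) and for every t, pi t maximises the score,
   computed after projecting with Pi^perp_{t-1}, over all not-yet-selected
   indices (any tie-breaking allowed). *)
Definition ipomp_selection (k : nat) (D : 'M[R]_(d, n)) (x : 'cV[R]_d)
    (pi : 'I_k -> 'I_n) : Prop :=
  injective pi /\
  forall t : 'I_k,
    let A := [set pi s | s in [pred s : 'I_k | (s < t)%N]] in
    forall i : 'I_n, i \notin A ->
    forall px pdi pdt : 'cV[R]_d,
      is_perp_proj D A x px ->
      is_perp_proj D A (col i D) pdi ->
      is_perp_proj D A (col (pi t) D) pdt ->
      ipomp_score pdi px <= ipomp_score pdt px.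

Definition std_gauss_pdf (z : 'cV[R]_d) : R :=
  (Num.sqrt (2 * pi)) ^- d * expR (- (dot z z) / 2).

(* t is a maximum likelihood estimate of y = <x, z> given the observations
   q_i = <d_i, z> = r_i for i in S: t = <x, z0> where z0 is a most likely
   value of z ~ N(0,I) consistent with the observations. *)
Definition ml_estimate (D : 'M[R]_(d, n)) (S : {set 'I_n}) (x : 'cV[R]_d)
    (r : 'I_n -> R) (t : R) : Prop :=
  exists z0 : 'cV[R]_d,
    (forall i, i \in S -> dot (col i D) z0 = r i) /\
    dot x z0 = t /\
    forall z : 'cV[R]_d, (forall i, i \in S -> dot (col i D) z = r i) ->
      std_gauss_pdf z <= std_gauss_pdf z0.

End Defs.

(** Under the Gaussian prior, maximising the likelihood over the affine set of
    [z] consistent with the observations means minimising [|z|]. For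
    orthonormal columns the point [z_S = \sum_(i in S) r_i d_i] is consistent,
    and it is orthogonal to every direction inside the consistent set, so by
    Pythagoras it is the unique minimiser and the estimate is
    [<x, z_S> = \sum_(i in S) <d_i, x> r_i]. Only the selected set [S] matters,
    not the way IP-OMP chose it. *)
From HB Require Import structures.
From mathcomp Require Import all_boot all_order all_algebra.
From mathcomp Require Import all_classical all_reals all_analysis.
From mathcomp Require Import lra.
Import Order.TTheory GRing.Theory Num.Theory.
Local Open Scope ring_scope.

Section Dot.
Context {R : realType} {d : nat}.
Implicit Types u v w : 'cV[R]_d.

Lemma dotE u v : dot u v = \sum_j u j 0 * v j 0.
Proof. by rewrite /dot !mxE; apply: eq_bigr => j _; rewrite mxE. Qed.

Lemma dotC u v : dot u v = dot v u.
Proof. by rewrite !dotE; apply: eq_bigr => j _; rewrite mulrC. Qed.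

Lemma dotBr u v w : dot u (v - w) = dot u v - dot u w.
Proof. by rewrite /dot mulmxBr !mxE. Qed.

Lemma dotBl u v w : dot (v - w) u = dot v u - dot w u.
Proof. by rewrite dotC dotBr !(dotC u). Qed.

Lemma dotZr u (a : R) v : dot u (a *: v) = a * dot u v.
Proof. by rewrite /dot -scalemxAr mxE. Qed.

Lemma dot_sumr (I : finType) (P : pred I) (F : I -> 'cV[R]_d) u :
  dot u (\sum_(i | P i) F i) = \sum_(i | P i) dot u (F i).
Proof. by rewrite /dot mulmx_sumr summxE. Qed.

Lemma dot_self_ge0 u : 0 <= dot u u.
Proof. by rewrite dotE; apply: sumr_ge0 => j _; rewrite -expr2 sqr_ge0. Qed.

Lemma dot_self_eq0 u : dot u u = 0 -> u = 0.
Proof.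
rewrite dotE => /psumr_eq0P u0; apply/matrixP => i j; rewrite (ord1 j) mxE.
have /eqP := u0 (fun l _ => sqr_ge0 (u l 0)) i isT.
by rewrite mulf_eq0 orbb => /eqP.
Qed.

Lemma ler_std_gauss_pdf u v :
  (std_gauss_pdf u <= std_gauss_pdf v) = (dot v v <= dot u u).
Proof.
rewrite /std_gauss_pdf ler_pM2l; last first.
  by rewrite invr_gt0 exprn_gt0 // sqrtr_gt0 mulr_gt0 // pi_gt0.
by rewrite ler_expR ler_pM2r ?invr_gt0 // lerN2.
Qed.

End Dot.

Section MaximumLikelihood.
Variables (R : realType) (d n : nat) (D : 'M[R]_(d, n)) (S : {set 'I_n}).
Variable r : 'I_n -> R.

Definition consistent (z : 'cV[R]_d) : Prop :=
  forall i, i \in S -> dot (col i D) z = r i.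

Lemma consistent_dot_self z0 z :
    consistent z -> (forall z', consistent z' -> dot z0 z' = dot z0 z0) ->
  dot z z = dot z0 z0 + dot (z - z0) (z - z0).
Proof.
by move=> zS z0_orth; rewrite !dotBl !dotBr (dotC z z0) z0_orth //; lra.
Qed.

Lemma ml_estimate_min_norm (x : 'cV[R]_d) (t : R) z0 :
    consistent z0 -> (forall z, consistent z -> dot z0 z = dot z0 z0) ->
  ml_estimate D S x r t <-> t = dot x z0.
Proof.
move=> z0S z0_orth; split.
- move=> [z1 [z1S [<- z1_max]]].
  have := z1_max z0 z0S.
  rewrite ler_std_gauss_pdf (consistent_dot_self z0 z1 z1S z0_orth) => le.
  have /dot_self_eq0/eqP : dot (z1 - z0) (z1 - z0) = 0.
    by apply/eqP; rewrite eq_le dot_self_ge0 andbT; lra.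
  by rewrite subr_eq0 => /eqP ->.
- move=> ->; exists z0; do 2!split=> //.
  move=> z zS; rewrite ler_std_gauss_pdf (consistent_dot_self z0 z zS z0_orth).
  by rewrite lerDl dot_self_ge0.
Qed.

Definition back_projection : 'cV[R]_d := \sum_(i in S) r i *: col i D.

Lemma dot_back_projection z :
  dot back_projection z = \sum_(i in S) dot (col i D) z * r i.
Proof.
by rewrite dotC dot_sumr; apply: eq_bigr => i _; rewrite dotZr mulrC dotC.
Qed.

Lemma back_projection_orth :
  consistent back_projection -> forall z, consistent z ->
  dot back_projection z = dot back_projection back_projection.
Proof.
move=> bpS z zS; rewrite !dot_back_projection.
by apply: eq_bigr => i iS; rewrite bpS ?zS.
Qed.

Lemma dot_col_orthogonal i j :
  col_orthogonal D -> dot (col i D) (col j D) = (i == j)%:R.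
Proof.
move=> /(congr1 (fun M : 'M[R]_n => M i j)); rewrite !mxE => <-.
by rewrite dotE; apply: eq_bigr => l _; rewrite !mxE.
Qed.

Lemma col_orthogonal_lsq_consistent :
  col_orthogonal D -> consistent back_projection.
Proof.
move=> DO j jS; rewrite dot_sumr (bigD1 j) //= big1 => [|i /andP[_ ij]].
  by rewrite dotZr dot_col_orthogonal // eqxx mulr1 addr0.
by rewrite dotZr dot_col_orthogonal // eq_sym (negPf ij) mulr0.
Qed.

Lemma ml_estimate_col_orthogonal (x : 'cV[R]_d) (t : R) :
  col_orthogonal D ->
  ml_estimate D S x r t <-> t = \sum_(i in S) dot (col i D) x * r i.
Proof.
move=> DO; have bpS := col_orthogonal_lsq_consistent DO.
have bp_orth := back_projection_orth bpS.
by rewrite (ml_estimate_min_norm x t _ bpS bp_orth) dotC dot_back_projection.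
Qed.

End MaximumLikelihood.

Theorem lemmaC1 (R : realType) (d n k : nat) (D : 'M[R]_(d, n))
    (x : 'cV[R]_d) (r : 'I_n -> R) (pi : 'I_k -> 'I_n) :
  col_orthogonal D ->
  ipomp_selection D x pi ->
  forall t : R,
    ml_estimate D [set pi s | s : 'I_k] x r t <->
    t = \sum_(i in [set pi s | s : 'I_k]) dot (col i D) x * r i.
Proof. by move=> DO _ t; exact: ml_estimate_col_orthogonal. Qed.
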